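(* Consider the problem and algorithm AC2CD described in the context, let $\{x^k\}$ be a sequence produced by AC2CD, and assume $\lim_{k\to\infty}x^k=x^*$. Let $\mathcal A(x^* )=\{i:x^*_i=l_i\}\cup\{i:x^*_i=u_i\}$ and $D^*_{\min}=\min_{i\notin\mathcal A(x^* )}D_i(x^* )$ (which is well defined and positive), and let $k_N$ be the first outer iteration such that $\|x^k-x^*\|_\infty<D^*_{\min}$ for all $k>k_N$. Then for all $k>k_N$, \[ l_h<x^k_h<u_h\quad\text{for all } h\notin\mathcal A(x^* ). \]
   Context: Problem: minimize $f(x)$ subject to $e^T x = b$ and $l_i \le x_i \le u_i$ ($i=1,\dots,n$), where $n\ge 2$, $e$ is the all-ones vector, $b\in\mathbb{R}$, $l_i\in\mathbb{R}\cup\{-\infty\}$, $u_i\in\mathbb{R}\cup\{+\infty\}$, $l_i<u_i$, and $f:\mathbb{R}^n\to\mathbb{R}$ is continuously differentiable with $\nabla f$ Lipschitz continuous on $\mathbb{R}^n$. $\mathcal F$ is the feasible set, $e_i$ the $i$th unit vector. For $x\in\mathcal F$, $D_h(x)=\min\{x_h-l_h,u_h-x_h\}$. Algorithm AC2CD with parameters $\tau\in(0,1]$, $\gamma,\delta\in(0,1)$, $0<A_l\le A_u<\infty$ and starting point $x^0\in\mathcal F$: for $k=0,1,2,\dots$: let $D^k=\max_h D_h(x^k)$; choose $j(k)$ with $D_{j(k)}(x^k)\ge\tau D^k$; choose a permutation $(p^k_1,\dots,p^k_n)$ of $\{1,\dots,n\}$; set $z^{k,1}=x^k$; for $i=1,\dots,n$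 (inner iteration $(k,i)$): $g^{k,i}=\nabla_{j(k)}f(z^{k,i})-\nabla_{p^k_i}f(z^{k,i})$, $d^{k,i}=g^{k,i}(e_{p^k_i}-e_{j(k)})$; $\bar\alpha^{k,i}=\min\{u_{p^k_i}-z^{k,i}_{p^k_i},z^{k,i}_{j(k)}-l_{j(k)}\}/g^{k,i}$ if $g^{k,i}>0$, $=\min\{z^{k,i}_{p^k_i}-l_{p^k_i},u_{j(k)}-z^{k,i}_{j(k)}\}/|g^{k,i}|$ if $g^{k,i}<0$, $=0$ if $g^{k,i}=0$; choose $A^{k,i}\in[A_l,A_u]$, set $\Delta^{k,i}=\min\{\bar\alpha^{k,i},A^{k,i}\}$; starting from $\alpha=\Delta^{k,i}$, while $f(z^{k,i}+\alpha d^{k,i})>f(z^{k,i})+\gamma\alpha\nabla f(z^{k,i})^Td^{k,i}$ replace $\alpha$ by $\delta\alpha$; $\alpha^{k,i}$ is the final $\alpha$ and $z^{k,i+1}=z^{k,i}+\alpha^{k,i}d^{k,i}$. Then $x^{k+1}=z^{k,n+1}$. Standing assumptions: $\mathcal L_0=\{x\in\mathcal F: f(x)\le f(x^0)\}$ is nonempty and compact, and every $x\in\mathcal L_0$ has some index $i$ with $l_i<x_i<u_i$. *)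

From HB Require Import structures.
From mathcomp Require Import all_boot all_order all_algebra perm.
From mathcomp Require Import all_classical all_reals all_analysis.
Set Implicit Arguments.
Unset Strict Implicit.
Unset Printing Implicit Defensive.
Import Order.TTheory GRing.Theory Num.Theory.
Import numFieldNormedType.Exports.
Local Open Scope classical_set_scope.
Local Open Scope ring_scope.

Section AC2CD.
Variables (R : realType) (n : nat).
Notation vec := 'rV[R]_n.

Definition unitv (i : 'I_n) : vec := delta_mx 0 i.

Definition infnorm (v : vec) : R := \big[Num.max/0]_(i < n) `|v 0 i|.

Definition feasible (l u : 'I_n -> \bar R) (b : R) (x : vec) : Prop :=
  \sum_(i < n) x 0 i = b /\
  forall i, (l i <= (x 0 i)%:E)%E /\ ((x 0 i)%:E <= u i)%E.

Definition Dh (l u : 'I_n -> \bar R) (h : 'I_n) (x : vec) : \bar R :=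
  mine ((x 0 h)%:E - l h)%E (u h - (x 0 h)%:E)%E.

Definition Dmax (l u : 'I_n -> \bar R) (x : vec) : \bar R :=
  \big[maxe/-oo%E]_(h < n) Dh l u h x.

Definition active (l u : 'I_n -> \bar R) (x : vec) (i : 'I_n) : Prop :=
  (x 0 i)%:E = l i \/ (x 0 i)%:E = u i.

Definition Dmin (l u : 'I_n -> \bar R) (x : vec) : \bar R :=
  \big[mine/+oo%E]_(i < n | ~~ `[< active l u x i >]) Dh l u i x.

Definition is_gradient (f : vec -> R) (gf : vec -> vec) : Prop :=
  forall x, differentiable f x /\
    forall v, 'd f x v = \sum_(i < n) gf x 0 i * v 0 i.

Definition lipschitz_on_Rn (g : vec -> vec) : Prop :=
  exists L : R, forall x y, infnorm (g x - g y) <= L * infnorm (x - y).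

Definition level_set (f : vec -> R) (l u : 'I_n -> \bar R) (b : R) (x0 : vec)
  : set vec := [set x | feasible l u b x /\ f x <= f x0].

(* maximal feasible stepsize alpha_bar along d = g (e_p - e_j) *)
Definition alpha_bar (l u : 'I_n -> \bar R) (z : vec) (p j : 'I_n) (g : R)
  : \bar R :=
  if 0 < g then
    (mine (u p - (z 0 p)%:E) ((z 0 j)%:E - l j) * (g^-1)%:E)%E
  else if g < 0 then
    (mine ((z 0 p)%:E - l p) (u j - (z 0 j)%:E) * ((`|g|)^-1)%:E)%E
  else 0%E.

Definition armijo (f : vec -> R) (gf : vec -> vec) (gam : R) (z d : vec)
  (a : R) : Prop :=
  f (z + a *: d) <= f z + gam * a * (\sum_(i < n) gf z 0 i * d 0 i).

Definition backtrack (f : vec -> R) (gf : vec -> vec) (gam delta : R)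
  (z d : vec) (Delta alpha : R) : Prop :=
  exists m : nat, alpha = delta ^+ m * Delta /\
    armijo f gf gam z d (delta ^+ m * Delta) /\
    forall m', (m' < m)%N -> ~ armijo f gf gam z d (delta ^+ m' * Delta).

(* x is a sequence produced by AC2CD (inner iterations indexed 0..n-1,
   z k 0 = x^k, z k n = x^{k+1}) *)
Definition ac2cd_seq (f : vec -> R) (gf : vec -> vec) (l u : 'I_n -> \bar R)
  (tau gam delta Al Au : R) (x : nat -> vec) : Prop :=
  exists (j : nat -> 'I_n) (p : nat -> {perm 'I_n})
         (A alpha : nat -> nat -> R) (z : nat -> nat -> vec),
  forall k,
    (tau%:E * Dmax l u (x k) <= Dh l u (j k) (x k))%E /\
    z k 0%N = x k /\
    x k.+1 = z k n /\
    forall i : 'I_n,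
      let pki := p k i in
      let g := gf (z k i) 0 (j k) - gf (z k i) 0 pki in
      let d := g *: (unitv pki - unitv (j k)) in
      let Delta := fine (mine (alpha_bar l u (z k i) pki (j k) g) (A k i)%:E) in
      Al <= A k i <= Au /\
      backtrack f gf gam delta (z k i) d Delta (alpha k i) /\
      z k i.+1 = z k i + alpha k i *: d.

End AC2CD.

From HB Require Import structures.
From mathcomp Require Import all_boot all_order all_algebra perm.
From mathcomp Require Import all_classical all_reals all_analysis.
From mathcomp Require Import lra.
Set Implicit Arguments.
Unset Strict Implicit.
Unset Printing Implicit Defensive.
Import Order.TTheory GRing.Theory Num.Theory.
Import numFieldNormedType.Exports.
Local Open Scope classical_set_scope.
Local Open Scope ring_scope.

Section FreeCoordinates.
Variables (R : realType) (n : nat) (l u : 'I_n -> \bar R).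

Lemma Dmin_le_Dh (x : 'rV[R]_n) (h : 'I_n) :
  ~ active l u x h -> (Dmin l u x <= Dh l u h x)%E.
Proof. by move=> xh_free; apply: bigmin_le_cond; apply/negP => /asboolP. Qed.

Lemma entry_le_infnorm (v : 'rV[R]_n) (h : 'I_n) : `|v 0 h| <= infnorm v.
Proof. exact: (le_bigmax 0 (fun i : 'I_n => `|v 0 i|) h). Qed.

Lemma lt_Dh_inside_bounds (x y : 'rV[R]_n) (h : 'I_n) :
  ((`|y 0 h - x 0 h|)%:E < Dh l u h x)%E ->
  (l h < (y 0 h)%:E)%E /\ ((y 0 h)%:E < u h)%E.
Proof.
rewrite /Dh lt_min => /andP[lt_lower lt_upper].
have le_yx := ler_norm (y 0 h - x 0 h).
have le_xy : x 0 h - y 0 h <= `|y 0 h - x 0 h| by rewrite distrC ler_norm.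
split.
- move: lt_lower; case: (l h) => [r| |] //=; last by rewrite ltNyr.
  by rewrite -EFinD !lte_fin; lra.
- move: lt_upper; case: (u h) => [r| |] //=; last by move=> _; exact: ltry.
  by rewrite -EFinD !lte_fin; lra.
Qed.

End FreeCoordinates.

Theorem theorem4 (R : realType) (n : nat) (f : 'rV[R]_n -> R)
  (gf : 'rV[R]_n -> 'rV[R]_n) (b : R) (l u : 'I_n -> \bar R)
  (tau gam delta Al Au : R) (x : nat -> 'rV[R]_n) (xs : 'rV[R]_n) (kN : nat) :
  (2 <= n)%N ->
  (forall i, l i != +oo%E) -> (forall i, u i != -oo%E) ->
  (forall i, (l i < u i)%E) ->
  is_gradient f gf -> lipschitz_on_Rn gf ->
  0 < tau <= 1 -> 0 < gam < 1 -> 0 < delta < 1 -> 0 < Al -> Al <= Au ->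
  feasible l u b (x 0%N) ->
  level_set f l u b (x 0%N) !=set0 ->
  compact (level_set f l u b (x 0%N)) ->
  (forall y, level_set f l u b (x 0%N) y ->
     exists i, (l i < (y 0 i)%:E)%E /\ ((y 0 i)%:E < u i)%E) ->
  ac2cd_seq f gf l u tau gam delta Al Au x ->
  x @ \oo --> xs ->
  (* k_N is the first outer iteration with ||x^k - x*||_oo < D*_min for all k > k_N *)
  (forall k, (kN < k)%N -> ((infnorm (x k - xs))%:E < Dmin l u xs)%E) ->
  (forall k', (forall k, (k' < k)%N -> ((infnorm (x k - xs))%:E < Dmin l u xs)%E) ->
     (kN <= k')%N) ->
  forall k, (kN < k)%N ->
    forall h, ~ active l u xs h ->
      (l h < (x k 0 h)%:E)%E /\ ((x k 0 h)%:E < u h)%E.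
Proof.
move=> _ _ _ _ _ _ _ _ _ _ _ _ _ _ _ _ _ close_after_kN _ k lt_kN_k h h_free.
apply: (lt_Dh_inside_bounds (x := xs)).
have close_xs := lt_le_trans (close_after_kN k lt_kN_k) (Dmin_le_Dh h_free).
apply: le_lt_trans close_xs.
by rewrite lee_fin; have := entry_le_infnorm (x k - xs) h; rewrite !mxE.
Qed.
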